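(* Let $(TN,\mu_0)$ be a perpetual $T$-system with regeneration cluster $cl$. Then for any two markings $\mu_1,\mu_2$ reachable in $(TN,\mu_0)$, $$en(TN,\mu_1)=en(TN,\mu_2)\implies\mu_1=\mu_2.$$
   Context: A net consists of finite disjoint sets of places and transitions and directed edges between places and transitions (no place–place or transition–transition edges); nets are weakly connected. ${}^\bullet x$, $x^\bullet$ are pre-set and post-set of a node. A $T$-net is a net in which every place has exactly one pre-transition and exactly one post-transition; a $T$-system is a $T$-net with a marking (map from places to $\mathbb{N}$). A transition is enabled if all its pre-places are marked; firing removes one token from each pre-place and adds one to each post-place. $en(TN,\mu)$ is the set of transitions enabled at $\mu$; reachable markings arise from $\mu_0$ by firing finite sequences of successively enabled transitions. The cluster of a node $x$ is the smallest subnet containing $x$ containing $p^\bullet$ for each of its places $p$ and ${}^\bullet t$ for each of its transitions $t$; $\mu_{cl}$ is the marking equal to $1$ on the places of $cl$ and $0$ elsewhere. $(TN,\mu_0)$ is perpetual with regeneration cluster $cl$ if it is live and bounded and $\mu_{cl}$ is a home marking (reachable from every reachable marking). *)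

From mathcomp Require Import all_boot.
Set Implicit Arguments. Unset Strict Implicit. Unset Printing Implicit Defensive.

Record net := Net {
  place : finType;
  trans : finType;
  pt : place -> trans -> bool;
  tp : trans -> place -> bool
}.

Section NetDefs.
Variable N : net.

Definition node : finType := (place N + trans N)%type.

Definition arc (x y : node) : bool :=
  match x, y with
  | inl p, inr t => pt p t
  | inr t, inl p => tp t p
  | _, _ => false
  end.

Definition weakly_connected : Prop :=
  forall x y : node, connect (fun a b => arc a b || arc b a) x y.

Definition preset (x : node) : {set node} := [set y | arc y x].
Definition postset (x : node) : {set node} := [set y | arc x y].

Definition is_T_net : Prop :=
  forall p : place N,
    #|[set t | tp t p]| = 1 /\ #|[set t | pt p t]| = 1.

Definition marking := {ffun place N -> nat}.

Definition enabled (m : marking) (t : trans N) : bool :=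
  [forall p, pt p t ==> (0 < m p)].

Definition en (m : marking) : {set trans N} := [set t | enabled m t].

Definition fire (m : marking) (t : trans N) : marking :=
  [ffun p => m p - pt p t + tp t p].

Inductive reachable (m : marking) : marking -> Prop :=
  | reach_refl : reachable m m
  | reach_step m' t : reachable m m' -> enabled m' t -> reachable m (fire m' t).

Definition live (m0 : marking) : Prop :=
  forall m, reachable m0 m -> forall t, exists2 m', reachable m m' & enabled m' t.

Definition bounded (m0 : marking) : Prop :=
  exists k, forall m, reachable m0 m -> forall p, m p <= k.

Definition cluster_closed (S : {set node}) : bool :=
  [forall p : place N, (inl p \in S) ==> (postset (inl p) \subset S)] &&
  [forall t : trans N, (inr t \in S) ==> (preset (inr t) \subset S)].

Definition cluster (x : node) : {set node} :=
  \bigcap_(S | cluster_closed S && (x \in S)) S.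

Definition mu_cl (cl : {set node}) : marking :=
  [ffun p => (inl p \in cl) : nat].

Definition home_marking (m0 m : marking) : Prop :=
  forall m', reachable m0 m' -> reachable m' m.

Definition perpetual (m0 : marking) (cl : {set node}) : Prop :=
  [/\ live m0, bounded m0 & home_marking m0 (mu_cl cl)].

End NetDefs.

From mathcomp Require Import all_boot zify.

Set Implicit Arguments.
Unset Strict Implicit.
Unset Printing Implicit Defensive.

(* In a T-net every place p is an arc pre(p) -> p -> post(p) of a flow graph
   on transitions, and the cluster of x is one transition ts with its
   pre-places, so mu_cl marks exactly the places with post(p) = ts.  Liveness
   and boundedness make the flow graph strongly connected.  The marking
   equation from a reachable m to the home marking mu_cl gives a firing count
   s, which strong connectivity squeezes between s(ts) and s(ts) + 1; hence m
   is encoded by the set U of transitions with s = s(ts) + 1.  If m1 and m2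
   enable the same transitions, a transition of U1 \ U2 would be captured by
   an unmarked siphon at m1, contradicting liveness; so U1 = U2 and m1 = m2. *)

Section Nets.
Variable N : net.
Implicit Types (m : marking N) (p q : place N) (t : trans N).

Lemma reachable_trans m1 m2 m3 :
  reachable m1 m2 -> reachable m2 m3 -> reachable m1 m3.
Proof. by move=> R12; elim=> // m t _ R13 en_t; exact: reach_step. Qed.

Lemma bounded_not_pumpable m0 p :
  bounded m0 ->
  ~ (forall m, reachable m0 m -> exists2 m', reachable m m' & m p < m' p).
Proof.
move=> [k Hk] pump.
have big n : exists2 m, reachable m0 m & n <= m p.
  elim: n => [|n [m Rm Hn]]; first by exists m0 => //; constructor.
  have [m' Rm' lt_pm] := pump m Rm.
  by exists m'; [exact: reachable_trans Rm Rm' | lia].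
have [m Rm] := big k.+1; have := Hk m Rm p; lia.
Qed.

Lemma bounded_pre_place m0 (p0 : place N) :
  weakly_connected N -> bounded m0 -> forall t, exists p, pt p t.
Proof.
move=> Hwc Hb t; case: (boolP [exists p, pt p t]) => [/existsP //|/existsPn nopre].
have [q tq] : exists q, tp t q.
  have /connectP[[|y s] //= /andP[ty _] _] := Hwc (inr t) (inl p0).
  by case: y ty => [q|u] //=; rewrite (negbTE (nopre q)) orbF => tq; exists q.
exfalso; apply: (bounded_not_pumpable (p := q) Hb) => m _.
have en_t : enabled m t by apply/forallP => p; rewrite (negbTE (nopre p)).
exists (fire m t); first exact: reach_step (reach_refl m) en_t.
by rewrite ffunE tq (negbTE (nopre q)); lia.
Qed.

Definition siphon (D : pred (place N)) : Prop :=
  forall p t, D p -> tp t p -> exists2 q, D q & pt q t.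

Lemma siphon_unmarked (D : pred (place N)) m m' :
  siphon D -> reachable m m' ->
  (forall q, D q -> m q = 0) -> forall q, D q -> m' q = 0.
Proof.
move=> sD; elim=> // m'' t _ IH en_t D0 q Dq; rewrite ffunE IH //.
case tq: (tp t q); last by case: (pt q t).
have [q' Dq' q't] := sD q t Dq tq.
by move/forallP: en_t => /(_ q'); rewrite q't IH.
Qed.

Lemma live_siphon_marked (D : pred (place N)) m0 m q t :
  live m0 -> reachable m0 m -> siphon D -> D q -> pt q t ->
  exists2 q', D q' & 0 < m q'.
Proof.
move=> Hl Rm sD Dq qt.
case: (boolP [exists q', D q' && (0 < m q')]) => [/existsP[q' /andP[]]|/existsPn D0].
  by exists q'.
have [m' Rm' en_t] := Hl m Rm t.
have m'q : m' q = 0.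
  apply: (siphon_unmarked sD Rm' _ Dq) => q' Dq'.
  by move: (D0 q'); rewrite Dq' /= lt0n negbK => /eqP.
by move/forallP: en_t => /(_ q); rewrite qt m'q.
Qed.

Lemma en_eq_enabled m1 m2 : en m1 = en m2 -> enabled m1 =1 enabled m2.
Proof. by move/setP=> E t; move: (E t); rewrite !inE. Qed.

End Nets.

Lemma set_card1_pred (T : finType) (P : pred T) :
  #|[set x | P x]| = 1 -> exists x0, forall x, P x = (x == x0).
Proof.
move/eqP/cards1P => [x0 E]; exists x0 => x.
by move/setP/(_ x): E; rewrite !inE.
Qed.

Section TNets.
Variable N : net.
Hypothesis HT : is_T_net N.
Implicit Types (m : marking N) (p q : place N) (t u v : trans N).

Let pre_trans_unique p : exists t0, forall t, tp t p = (t == t0).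
Proof. by apply: set_card1_pred; case: (HT p). Qed.

Let post_trans_unique p : exists t0, forall t, pt p t = (t == t0).
Proof. by apply: set_card1_pred; case: (HT p). Qed.

Let pre_trans_exists p : exists t, tp t p.
Proof. by have [t0 E] := pre_trans_unique p; exists t0; rewrite E. Qed.

Let post_trans_exists p : exists t, pt p t.
Proof. by have [t0 E] := post_trans_unique p; exists t0; rewrite E. Qed.

Definition pre_trans p : trans N := xchoose (pre_trans_exists p).
Definition post_trans p : trans N := xchoose (post_trans_exists p).

Lemma tpE t p : tp t p = (pre_trans p == t).
Proof.
have [t0 E] := pre_trans_unique p; have := xchooseP (pre_trans_exists p).
by rewrite /pre_trans !E => /eqP ->; rewrite eq_sym.
Qed.

Lemma ptE p t : pt p t = (post_trans p == t).
Proof.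
have [t0 E] := post_trans_unique p; have := xchooseP (post_trans_exists p).
by rewrite /post_trans !E => /eqP ->; rewrite eq_sym.
Qed.

Lemma fireE m t p : fire m t p = m p - (post_trans p == t) + (pre_trans p == t).
Proof. by rewrite ffunE ptE tpE. Qed.

Lemma enabledP {m t} :
  reflect (forall p, post_trans p = t -> 0 < m p) (enabled m t).
Proof.
apply: (iffP forallP) => [en_t p Ep | pos p]; first by move: (en_t p); rewrite ptE Ep eqxx.
by rewrite ptE; apply/implyP => /eqP; exact: pos.
Qed.

Lemma disabled_pre_place m t :
  ~~ enabled m t -> exists2 p, post_trans p = t & m p = 0.
Proof.
move/forallPn => [p]; rewrite negb_imply ptE lt0n negbK => /andP[/eqP Ep /eqP m0].
by exists p.
Qed.

Definition flow : rel (trans N) :=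
  fun a b => [exists p, (pre_trans p == a) && (post_trans p == b)].

Lemma flow_edge p : flow (pre_trans p) (post_trans p).
Proof. by apply/existsP; exists p; rewrite !eqxx. Qed.

Lemma flow_closed_connect (P : pred (trans N)) u v :
  (forall p, P (pre_trans p) -> P (post_trans p)) ->
  connect flow u v -> P u -> P v.
Proof.
move=> stepP /connectP[s pth ->] {v}; elim: s u pth => //= w s IH u.
case/andP=> /existsP[p /andP[/eqP Eu /eqP Ew]] pth Pu.
by apply: IH pth _; rewrite -Ew stepP // Eu.
Qed.

Lemma marking_equation m m' :
  reachable m m' ->
  exists s : trans N -> nat, forall p,
    m' p + s (post_trans p) = m p + s (pre_trans p).
Proof.
elim=> [|m1 t _ [s Hs] en_t]; first by exists (fun=> 0) => p; rewrite !addn0.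
exists (fun u => s u + (u == t)) => p; rewrite fireE.
move/enabledP: en_t => /(_ p) pos; have := Hs p.
by case: eqP pos => [-> /(_ erefl)|_ _]; lia.
Qed.

(* Firings outside a set of transitions closed under flow predecessors never
   affect the places in front of that set, so they can be dropped. *)
Lemma reachable_restrict (P : pred (trans N)) m m' :
  (forall p, P (post_trans p) -> P (pre_trans p)) -> reachable m m' ->
  exists m'', [/\ reachable m m'',
    forall p, P (post_trans p) -> m'' p = m' p &
    forall p, ~~ P (post_trans p) -> m p <= m'' p].
Proof.
move=> closedP; elim=> [|m1 t _ [m'' [R'' agree grow]] en_t].
  by exists m; split=> //; constructor.
case Pt: (P t).
  exists (fire m'' t); split.
  - apply: reach_step R'' _; apply/enabledP => p Ep.
    by rewrite agree ?Ep //; exact: (elimT enabledP en_t p Ep).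
  - by move=> p Pp; rewrite !fireE agree.
  - move=> p nPp; rewrite fireE.
    have /negbTE -> : post_trans p != t by apply: contraNneq nPp => ->.
    by have := grow p nPp; lia.
exists m''; split=> // p Pp; rewrite fireE agree //.
have /negbTE -> : post_trans p != t by apply: contraTneq Pp => ->; rewrite Pt.
have /negbTE -> : pre_trans p != t by apply: contraTneq (closedP p Pp) => ->; rewrite Pt.
by rewrite subn0 addn0.
Qed.

(* If post(p) could not reach pre(p), firing only the transitions that reach
   pre(p) would pump the place p. *)
Lemma live_bounded_flow_cycle m0 p :
  live m0 -> bounded m0 -> connect flow (post_trans p) (pre_trans p).
Proof.
move=> Hl Hb; apply/negPn/negP => nba.
pose P := [pred w | connect flow w (pre_trans p)].
have closedP q : P (post_trans q) -> P (pre_trans q).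
  exact: connect_trans (connect1 (flow_edge q)).
apply: (bounded_not_pumpable (p := p) Hb) => m Rm.
have [m1 Rm1 en_a] := Hl m Rm (pre_trans p).
have [m'' [R'' agree grow]] := reachable_restrict closedP Rm1.
exists (fire m'' (pre_trans p)).
  apply: reach_step R'' _; apply/enabledP => q Eq.
  by rewrite agree /P /= ?Eq ?connect0 //; exact: (elimT enabledP en_a q Eq).
have /negbTE ba : post_trans p != pre_trans p.
  by apply: contraNneq nba => ->; exact: connect0.
by rewrite fireE ba eqxx; have := grow p nba; lia.
Qed.

Lemma flow_connect_to_root m0 ts :
  live m0 -> bounded m0 -> (forall v, connect flow ts v) ->
  forall v, connect flow v ts.
Proof.
move=> Hl Hb root v; apply: (flow_closed_connect (P := [pred w | connect flow w ts])) (root v) _.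
  by move=> p; apply: connect_trans; exact: live_bounded_flow_cycle Hl Hb.
exact: connect0.
Qed.

(* The places in front of transitions unreachable from ts form a siphon that
   is empty at mu. *)
Lemma flow_root_of_home m0 mu ts :
  live m0 -> reachable m0 mu ->
  (forall t, exists p, post_trans p = t) ->
  (forall p, 0 < mu p -> post_trans p = ts) ->
  forall v, connect flow ts v.
Proof.
move=> Hl Rmu Hpre marked v; apply/negPn/negP => nv.
pose D := [pred q | ~~ connect flow ts (post_trans q)].
have sD : siphon D.
  move=> q t Dq; rewrite tpE => /eqP Et; have [q' Eq'] := Hpre t.
  exists q'; last by rewrite ptE Eq'.
  rewrite /D /= Eq' -Et; apply: contra Dq => ct.
  exact: connect_trans ct (connect1 (flow_edge q)).
have [q0 Eq0] := Hpre v.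
have Dq0 : D q0 by rewrite /D /= Eq0.
have q0v : pt q0 v by rewrite ptE Eq0.
have [q' Dq' pos] := live_siphon_marked Hl Rmu sD Dq0 q0v.
by move: Dq'; rewrite /D /= (marked _ pos) connect0.
Qed.

Definition cluster_trans (x : node N) : trans N :=
  match x with inl p => post_trans p | inr t => t end.

Definition cluster_of_trans ts : {set node N} :=
  [set y | if y is inl q then post_trans q == ts else y == inr ts].

Lemma cluster_of_trans_closed ts : cluster_closed (cluster_of_trans ts).
Proof.
apply/andP; split; apply/forallP => z; apply/implyP; rewrite inE => Hz;
  apply/subsetP => -[q|u]; rewrite !inE //=.
- by rewrite ptE => /eqP <-; rewrite (eqP Hz).
- by rewrite ptE => /eqP ->.
Qed.

Lemma cluster_trans_mem S x :
  cluster_closed S -> x \in S -> inr (cluster_trans x) \in S.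
Proof.
case: x => [p|t] // /andP[/forallP/(_ p)/implyP postS _] /postS/subsetP; apply.
by rewrite inE /= ptE.
Qed.

Lemma mu_cl_cluster x p : mu_cl (cluster x) p = (post_trans p == cluster_trans x).
Proof.
rewrite ffunE; congr nat_of_bool; apply/idP/idP.
  have xS0 : cluster_closed (cluster_of_trans (cluster_trans x)) &&
             (x \in cluster_of_trans (cluster_trans x)).
    by rewrite cluster_of_trans_closed inE; case: x => * /=; rewrite eqxx.
  by move/bigcapP/(_ _ xS0); rewrite inE.
move=> /eqP Ep; apply/bigcapP => S /andP[cS xS].
have /andP[_ /forallP/(_ (cluster_trans x))/implyP preS] := cS.
by move: (cluster_trans_mem cS xS) => /preS/subsetP; apply; rewrite inE /= ptE Ep.
Qed.

Lemma potential_bounds ts m (s : trans N -> nat) :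
  (forall v, connect flow ts v) -> (forall v, connect flow v ts) ->
  (forall p, (post_trans p == ts) + s (post_trans p) = m p + s (pre_trans p)) ->
  forall v, s ts <= s v <= s ts + 1.
Proof.
move=> root coroot Hs v; apply/andP; split.
  apply: (flow_closed_connect (P := [pred w | s ts <= s w])) (root v) (leqnn _).
  by move=> p /=; have := Hs p; case: eqP => [->|_]; lia.
rewrite leqNgt; apply/negP => big.
suff : s ts + 1 < s ts by lia.
apply: (flow_closed_connect (P := [pred w | s ts + 1 < s w])) (coroot v) big.
by move=> p /=; have := Hs p; case: eqP => [->|_]; lia.
Qed.

(* [regen_set ts m U] is the marking equation from m to the marking of the
   cluster of ts when every transition of U fires once and no other one. *)
Definition regen_set ts m (U : {set trans N}) : Prop :=
  ts \notin U /\
  forall p, m p + (pre_trans p \in U) = (post_trans p == ts) + (post_trans p \in U).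

Lemma regen_set_of_reachable ts m (mu : marking N) :
  (forall v, connect flow ts v) -> (forall v, connect flow v ts) ->
  (forall p, mu p = (post_trans p == ts)) -> reachable m mu ->
  exists U, regen_set ts m U.
Proof.
move=> root coroot Emu /marking_equation[s Hs].
have Hs' p : (post_trans p == ts) + s (post_trans p) = m p + s (pre_trans p).
  by rewrite -Emu.
have bnd := potential_bounds root coroot Hs'.
exists [set v | s ts < s v]; split=> [|p]; first by rewrite inE ltnn.
rewrite !inE; have := Hs' p; have := bnd (pre_trans p); have := bnd (post_trans p).
lia.
Qed.

Lemma regen_set_disabled ts m U t :
  regen_set ts m U -> t \notin U -> t != ts -> (exists p, post_trans p = t) ->
  ~~ enabled m t.
Proof.
move=> [_ HU] tU tts [p Ep]; apply/enabledP => /(_ p Ep).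
by have := HU p; rewrite Ep (negbTE tU) (negbTE tts); lia.
Qed.

(* The places in front of U1 :\: U2 that are empty at m1 form a siphon. *)
Lemma regen_set_subset m0 ts m1 m2 U1 U2 :
  live m0 -> reachable m0 m1 -> (forall t, exists p, post_trans p = t) ->
  regen_set ts m1 U1 -> regen_set ts m2 U2 -> en m1 = en m2 -> U1 \subset U2.
Proof.
move=> Hl Rm1 Hpre [tsU1 H1] R2 Hen; apply/subsetP => u u1; apply/negPn/negP => u2.
have W_disabled t : t \in U1 :\: U2 -> ~~ enabled m1 t.
  rewrite inE => /andP[t2 t1]; rewrite (en_eq_enabled Hen).
  by apply: regen_set_disabled R2 t2 _ (Hpre t); apply: contraNneq tsU1 => <-.
pose D := [pred q | (post_trans q \in U1 :\: U2) && (m1 q == 0)].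
have sD : siphon D.
  move=> q t /andP[Wq /eqP m1q]; rewrite tpE => /eqP Et.
  have Wt : t \in U1 :\: U2.
    move: Wq; rewrite !inE -Et => /andP[q2 q1].
    have qts : post_trans q != ts by apply: contraNneq tsU1 => <-.
    have := H1 q; have := R2.2 q; rewrite m1q (negbTE qts) q1 (negbTE q2).
    by case: (pre_trans q \in U2); case: (pre_trans q \in U1) => //=; lia.
  have [q' Eq' m1q'] := disabled_pre_place (W_disabled t Wt).
  exists q'; last by rewrite ptE Eq'.
  by rewrite /D /= Eq' Wt m1q' eqxx.
have uW : u \in U1 :\: U2 by rewrite inE u1 u2.
have [q0 Eq0 m1q0] := disabled_pre_place (W_disabled u uW).
have Dq0 : D q0 by rewrite /D /= Eq0 uW m1q0 eqxx.
have q0u : pt q0 u by rewrite ptE Eq0.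
by have [q' /andP[_ /eqP ->]] := live_siphon_marked Hl Rm1 sD Dq0 q0u.
Qed.

Lemma regen_set_inj ts m1 m2 U : regen_set ts m1 U -> regen_set ts m2 U -> m1 = m2.
Proof. by move=> [_ H1] [_ H2]; apply/ffunP => p; have := H1 p; have := H2 p; lia. Qed.

End TNets.

Theorem proposition5p2 (N : net) (m0 : marking N) (x : node N) :
  weakly_connected N -> is_T_net N ->
  perpetual m0 (cluster x) ->
  forall m1 m2 : marking N,
    reachable m0 m1 -> reachable m0 m2 ->
    en m1 = en m2 -> m1 = m2.
Proof.
move=> Hwc HT [Hl Hb Hhome] m1 m2 R1 R2 Hen; apply/ffunP => p0.
have Hpre t : exists p, post_trans HT p = t.
  by have [p] := bounded_pre_place p0 Hwc Hb t; rewrite ptE => /eqP; exists p.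
set ts := cluster_trans HT x.
have Emu p : mu_cl (cluster x) p = (post_trans HT p == ts) := mu_cl_cluster HT x p.
have root : forall v, connect (flow HT) ts v.
  apply: (flow_root_of_home Hl (Hhome m0 (reach_refl m0)) Hpre) => p.
  by rewrite Emu; case: eqP.
have coroot := flow_connect_to_root Hl Hb root.
have [U1 RU1] := regen_set_of_reachable root coroot Emu (Hhome m1 R1).
have [U2 RU2] := regen_set_of_reachable root coroot Emu (Hhome m2 R2).
have E : U1 = U2.
  apply/eqP; rewrite eqEsubset (regen_set_subset Hl R1 Hpre RU1 RU2 Hen).
  exact: (regen_set_subset Hl R2 Hpre RU2 RU1 (esym Hen)).
by move: RU1; rewrite E => RU1; rewrite (regen_set_inj RU1 RU2).
Qed.
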